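(* Let $\Omega$ be a finite set (the vocabulary), let $p$ and $q$ be probability distributions on $\Omega$, and let $K\ge 1$. Let $X_1,\ldots,X_K$ be drawn i.i.d. from $p$, and let $\mathcal{S}=\{X_1,\ldots,X_K\}$. Let $P^\star(\mathrm{acc})$ denote the supremum of $\Pr(Z\in\mathcal{S})$ over all valid token-level selection rules, where $Z$ is the output of the rule. Then $$P^\star(\mathrm{acc})=\max_{\{\beta_y(x_{1:K})\}}\ \sum_{y\in\Omega}\min\Big(q(y),\ \sum_{x_1,\ldots,x_K\in\Omega}\beta_y(x_{1:K})\prod_{i=1}^K p(x_i)\Big),$$ where the maximum is over all families of numbers $\beta_y(x_{1:K})$, indexed by $y\in\Omega$ and $x_{1:K}=(x_1,\ldots,x_K)\in\Omega^K$, such that $0\le\beta_y(x_{1:K})\le1$, $\sum_{y\in\Omega}\beta_y(x_{1:K})=1$ for every $x_{1:K}\in\Omega^K$, and $\beta_y(x_{1:K})=0$ whenever $y\notin\{x_1,\ldots,x_K\}$. Moreover, if $\{\beta^\star_y(x_{1:K})\}$ attains this maximum, then $P^\star(\mathrm{acc})$ is attained by the following two-step valid token-level selection rule: first, given inputs $x_{1:K}$, output an intermediate token $Y\in\{x_1,\ldots,x_K\}$ with $\Pr(Y=y\mid X_{1:K}=x_{1:K})=\beta^\star_y(x_{1:K})$; second, apply single-draft speculative sampling to $Y$ with target distribution $q$ to produce the final output $Z$.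
   Context: A token-level selection rule is a conditional distribution $\mathcal{P}(\cdot\mid \mathcal{S})$ on $\Omega$ given the input $(X_1,\ldots,X_K)$; it is valid if its output $Z$ satisfies $\Pr(Z=z)=q(z)$ for every $z\in\Omega$ (i.e. $\sum_{x_{1:K}}\mathcal{P}(z\mid x_{1:K})\prod_i p(x_i)=q(z)$). Single-draft speculative sampling of a token $Y$ with distribution $p_I$ against target $q$: with probability $\min(1,q(Y)/p_I(Y))$ output $Z=Y$; otherwise output $Z$ drawn from the residual distribution $p^{\mathrm{res}}(x)=\frac{q(x)-\min(p_I(x),q(x))}{1-\sum_{x'}\min(p_I(x'),q(x'))}$. Its output has distribution $q$. *)

From HB Require Import structures.
From mathcomp Require Import all_boot all_order all_algebra.
From mathcomp Require Import boolp classical_sets reals.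
Set Implicit Arguments. Unset Strict Implicit. Unset Printing Implicit Defensive.
Import Order.TTheory GRing.Theory Num.Theory.
Local Open Scope ring_scope.
Local Open Scope classical_set_scope.

Definition prob_dist (R : realType) (Omega : finType) (p : Omega -> R) : Prop :=
  (forall x, 0 <= p x) /\ \sum_(x : Omega) p x = 1.

Definition wprob (R : realType) (Omega : finType) (K : nat)
  (p : Omega -> R) (x : {ffun 'I_K -> Omega}) : R :=
  \prod_(i < K) p (x i).

Definition inS (Omega : finType) (K : nat) (y : Omega) (x : {ffun 'I_K -> Omega}) : bool :=
  [exists i, x i == y].

(* Token-level selection rule: a conditional distribution P(z | x_{1:K}).
   It is valid if the output Z has distribution q. *)
Definition valid_rule (R : realType) (Omega : finType) (K : nat)
  (p q : Omega -> R) (P : {ffun 'I_K -> Omega} -> Omega -> R) : Prop :=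
  [/\ (forall x z, 0 <= P x z),
      (forall x, \sum_(z : Omega) P x z = 1) &
      (forall z, \sum_(x : {ffun 'I_K -> Omega}) P x z * wprob p x = q z)].

Definition acc (R : realType) (Omega : finType) (K : nat)
  (p : Omega -> R) (P : {ffun 'I_K -> Omega} -> Omega -> R) : R :=
  \sum_(x : {ffun 'I_K -> Omega}) wprob p x * \sum_(z | inS z x) P x z.

Definition Pstar (R : realType) (Omega : finType) (K : nat) (p q : Omega -> R) : R :=
  sup [set acc p P | P in [set P : {ffun 'I_K -> Omega} -> Omega -> R | valid_rule p q P]].

Definition feasible (R : realType) (Omega : finType) (K : nat)
  (beta : Omega -> {ffun 'I_K -> Omega} -> R) : Prop :=
  [/\ (forall y x, 0 <= beta y x <= 1),
      (forall x, \sum_(y : Omega) beta y x = 1) &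
      (forall y x, ~~ inS y x -> beta y x = 0)].

Definition draft_dist (R : realType) (Omega : finType) (K : nat)
  (p : Omega -> R) (beta : Omega -> {ffun 'I_K -> Omega} -> R) (y : Omega) : R :=
  \sum_(x : {ffun 'I_K -> Omega}) beta y x * wprob p x.

Definition objective (R : realType) (Omega : finType) (K : nat)
  (p q : Omega -> R) (beta : Omega -> {ffun 'I_K -> Omega} -> R) : R :=
  \sum_(y : Omega) Num.min (q y) (draft_dist p beta y).

(* Single-draft speculative sampling with draft distribution pI, target q.
   Acceptance probability min(1, q(y)/pI(y)), with the convention that it is
   1 when pI(y) = 0 (q(y)/0 = +oo). *)
Definition spec_accept (R : realType) (Omega : finType) (pI q : Omega -> R) (y : Omega) : R :=
  if pI y == 0 then 1 else Num.min 1 (q y / pI y).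

Definition residual (R : realType) (Omega : finType) (pI q : Omega -> R) (z : Omega) : R :=
  (q z - Num.min (pI z) (q z)) / (1 - \sum_(x : Omega) Num.min (pI x) (q x)).

Definition spec_kernel (R : realType) (Omega : finType) (pI q : Omega -> R) (y z : Omega) : R :=
  (if z == y then spec_accept pI q y else 0) + (1 - spec_accept pI q y) * residual pI q z.

Definition two_step_rule (R : realType) (Omega : finType) (K : nat)
  (p q : Omega -> R) (beta : Omega -> {ffun 'I_K -> Omega} -> R)
  (x : {ffun 'I_K -> Omega}) (z : Omega) : R :=
  \sum_(y : Omega) beta y x * spec_kernel (draft_dist p beta) q y z.

From HB Require Import structures.
From mathcomp Require Import all_boot all_order all_algebra.
From mathcomp Require Import boolp classical_sets reals topology normedtype derive.
Set Implicit Arguments. Unset Strict Implicit. Unset Printing Implicit Defensive.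
Import Order.TTheory GRing.Theory Num.Theory.
Import numFieldNormedType.Exports.
Local Open Scope ring_scope.

(* A valid rule P induces feasible weights: keep the mass P(.|x) puts on S and
   move the rest onto x_1.  Since Z has law q, the mass landing on a token z
   inside S is at most min(q z, draft mass of z), so Pr(Z in S) is bounded by
   the objective.  Conversely, for feasible weights the draft Y has law
   d = draft_dist p beta and lies in S; speculative sampling turns it into an
   output of law q and keeps it with probability sum_y min(d y, q y), which is
   the objective.  The objective is continuous on the compact feasible set, so
   it has a maximizer, and the two bounds pin P*(acc) to its maximum. *)

Lemma min_eq_of_sum_min (R : realDomainType) (I : finType) (f g : I -> R) :
  \sum_i Num.min (f i) (g i) = \sum_i f i -> forall i, Num.min (f i) (g i) = f i.
Proof.
move=> sum_eq i; apply/eqP; rewrite eq_sym -subr_eq0; apply/eqP.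
have ge0 j : true -> 0 <= f j - Num.min (f j) (g j) by rewrite subr_ge0 ge_min lexx.
by apply: (psumr_eq0P ge0) => //; rewrite sumrB sum_eq subrr.
Qed.

Lemma prob_dist_wprob (R : realType) (Omega : finType) (K : nat) (p : Omega -> R) :
  prob_dist p -> prob_dist (@wprob R Omega K p).
Proof.
case=> p_ge0 p_sum; split=> [x|]; first by apply: prodr_ge0.
rewrite /wprob -(bigA_distr_bigA (fun (i : 'I_K) (j : Omega) => p j)) /=.
by rewrite big1.
Qed.

Lemma inS_ffun (Omega : finType) (K : nat) (x : {ffun 'I_K -> Omega}) (i : 'I_K) :
  inS (x i) x.
Proof. by apply/existsP; exists i. Qed.

Section SpeculativeSampling.
Variables (R : realType) (Omega : finType) (pI q : Omega -> R).
Hypotheses (pI_dist : prob_dist pI) (q_dist : prob_dist q).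

Local Notation overlap := (\sum_(x : Omega) Num.min (pI x) (q x)).

Lemma spec_accept_ge0 y : 0 <= spec_accept pI q y.
Proof.
rewrite /spec_accept; case: ifP => _ //.
by rewrite le_min ler01 divr_ge0 //; [case: q_dist | case: pI_dist].
Qed.

Lemma spec_accept_le1 y : spec_accept pI q y <= 1.
Proof. by rewrite /spec_accept; case: ifP => _; rewrite ?ge_min lexx. Qed.

Lemma mul_spec_accept y : pI y * spec_accept pI q y = Num.min (pI y) (q y).
Proof.
rewrite /spec_accept; have [->|pIy_neq0] := eqVneq (pI y) 0.
  by rewrite mul0r; apply/esym/min_idPl; case: q_dist.
rewrite minr_pMr; last by case: pI_dist.
by rewrite mulr1 mulrCA divff // mulr1.
Qed.

Lemma overlap_le1 : overlap <= 1.
Proof.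
by case: q_dist => _ <-; apply: ler_sum => y _; rewrite ge_min lexx orbT.
Qed.

Lemma overlap_eq1 : overlap = 1 -> pI =1 q.
Proof.
move=> overlap1 y; case: pI_dist => _ pI_sum; case: q_dist => _ q_sum.
rewrite -(min_eq_of_sum_min (g := q) _ y); last by rewrite overlap1 pI_sum.
rewrite minC (min_eq_of_sum_min (g := pI)) //.
by under eq_bigr do rewrite minC; rewrite overlap1 q_sum.
Qed.

Lemma residual_ge0 z : 0 <= residual pI q z.
Proof.
by rewrite divr_ge0 // subr_ge0 ?overlap_le1 // ge_min lexx orbT.
Qed.

(* Also when [overlap = 1], where [residual] divides by zero: then [pI = q]. *)
Lemma mul_rejection_residual z :
  (1 - overlap) * residual pI q z = q z - Num.min (pI z) (q z).
Proof.
have [overlap1|overlap_neq1] := eqVneq overlap 1.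
  by rewrite overlap1 subrr mul0r (overlap_eq1 overlap1) minxx subrr.
by rewrite /residual mulrCA divff ?mulr1 // subr_eq0 eq_sym.
Qed.

Lemma spec_kernel_ge0 y z : 0 <= spec_kernel pI q y z.
Proof.
rewrite addr_ge0 //; first by case: ifP => _; rewrite ?spec_accept_ge0.
by rewrite mulr_ge0 ?residual_ge0 // subr_ge0 spec_accept_le1.
Qed.

Lemma spec_accept_le_kernel y : spec_accept pI q y <= spec_kernel pI q y y.
Proof.
by rewrite /spec_kernel eqxx lerDl mulr_ge0 ?residual_ge0 // subr_ge0 spec_accept_le1.
Qed.

Lemma sum_spec_kernel y : \sum_z spec_kernel pI q y z = 1.
Proof.
rewrite /spec_kernel big_split /= -big_mkcond big_pred1_eq -mulr_sumr.
have [overlap1|overlap_neq1] := eqVneq overlap 1.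
  have pIy_eq := overlap_eq1 overlap1 y.
  have -> : spec_accept pI q y = 1.
    by rewrite /spec_accept pIy_eq; case: eqP => // /eqP qy_neq0; rewrite divff ?minxx.
  by rewrite subrr mul0r addr0.
have -> : \sum_z residual pI q z = 1.
  apply: (mulfI (_ : 1 - overlap != 0)); first by rewrite subr_eq0 eq_sym.
  rewrite mulr_sumr mulr1.
  under eq_bigr do rewrite mul_rejection_residual.
  by rewrite sumrB; case: q_dist => _ ->.
by rewrite mulr1 addrC subrK.
Qed.

Lemma spec_kernel_mix z : \sum_y pI y * spec_kernel pI q y z = q z.
Proof.
rewrite /spec_kernel.
under eq_bigr do rewrite mulrDr mulrA mulrBr mulr1 mul_spec_accept.
rewrite big_split /= -mulr_suml sumrB; case: pI_dist => _ ->.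
rewrite mul_rejection_residual (bigD1 z) //= eqxx mul_spec_accept big1 ?addr0.
  by rewrite addrC subrK.
by move=> y /negbTE y_neq_z; rewrite eq_sym y_neq_z mulr0.
Qed.

End SpeculativeSampling.

Section TwoStepRule.
Variables (R : realType) (Omega : finType) (K : nat) (p q : Omega -> R).
Hypotheses (p_dist : prob_dist p) (q_dist : prob_dist q).
Variable beta : Omega -> {ffun 'I_K -> Omega} -> R.
Hypothesis beta_feasible : feasible beta.

Lemma feasible_ge0 y x : 0 <= beta y x.
Proof. by case: beta_feasible => beta01 _ _; case/andP: (beta01 y x). Qed.

Lemma prob_dist_draft_dist : prob_dist (draft_dist p beta).
Proof.
have [w_ge0 w_sum] := prob_dist_wprob K p_dist.
split=> [y|]; first by apply: sumr_ge0 => x _; rewrite mulr_ge0 ?feasible_ge0.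
rewrite /draft_dist exchange_big /= -w_sum; apply: eq_bigr => x _.
by rewrite -mulr_suml; case: beta_feasible => _ -> _; rewrite mul1r.
Qed.

Lemma two_step_rule_valid : valid_rule p q (two_step_rule p q beta).
Proof.
have d_dist := prob_dist_draft_dist.
split=> [x z|x|z].
- by apply: sumr_ge0 => y _; rewrite mulr_ge0 ?feasible_ge0 ?spec_kernel_ge0.
- rewrite /two_step_rule exchange_big /=.
  under eq_bigr do rewrite -mulr_sumr sum_spec_kernel // mulr1.
  by case: beta_feasible => _ -> _.
- rewrite -[RHS](spec_kernel_mix d_dist q_dist) /two_step_rule.
  under eq_bigr do rewrite mulr_suml.
  rewrite exchange_big /=; apply: eq_bigr => y _.
  by rewrite /draft_dist mulr_suml; apply: eq_bigr => x _; rewrite mulrAC.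
Qed.

Lemma objective_le_acc_two_step : objective p q beta <= acc p (two_step_rule p q beta).
Proof.
have d_dist := prob_dist_draft_dist.
have [w_ge0 _] := prob_dist_wprob K p_dist.
rewrite /objective.
under eq_bigr do rewrite minC -(mul_spec_accept d_dist q_dist) /draft_dist mulr_suml.
rewrite exchange_big /=; apply: ler_sum => x _.
under eq_bigr do rewrite mulrAC.
rewrite -mulr_suml mulrC ler_wpM2l // (big_mkcond (fun z => inS z x)) /=.
apply: ler_sum => z _; case: ifP => [z_in|z_notin]; last first.
  by case: beta_feasible => _ _ ->; rewrite ?mul0r ?z_notin.
rewrite /two_step_rule (bigD1 z) //= -[leLHS]addr0 lerD //.
  by rewrite ler_wpM2l ?feasible_ge0 ?spec_accept_le_kernel.
by apply: sumr_ge0 => y _; rewrite mulr_ge0 ?feasible_ge0 ?spec_kernel_ge0.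
Qed.

End TwoStepRule.

Lemma valid_rule_cst (R : realType) (Omega : finType) (K : nat) (p q : Omega -> R) :
  prob_dist p -> prob_dist q -> valid_rule p q (fun _ : {ffun 'I_K -> Omega} => q).
Proof.
move=> p_dist [q_ge0 q_sum]; split=> // z.
by rewrite -mulr_sumr; case: (prob_dist_wprob K p_dist) => _ ->; rewrite mulr1.
Qed.

Section RuleWeights.
Variables (R : realType) (Omega : finType) (K : nat) (p q : Omega -> R).
Hypotheses (p_dist : prob_dist p) (K_gt0 : (0 < K)%N).
Local Notation X := {ffun 'I_K -> Omega}.
Variable P : X -> Omega -> R.
Hypothesis P_valid : valid_rule p q P.

Definition rule_weights (y : Omega) (x : X) : R :=
  (if inS y x then P x y else 0) +
  (if y == x (Ordinal K_gt0) then 1 - \sum_(z | inS z x) P x z else 0).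

Lemma sum_inS_rule_le1 (x : X) : \sum_(z | inS z x) P x z <= 1.
Proof.
case: P_valid => P_ge0 P_sum _; rewrite -(P_sum x) [leRHS](bigID (fun z => inS z x)) /=.
by rewrite lerDl sumr_ge0.
Qed.

Lemma rule_weights_ge0 y x : 0 <= rule_weights y x.
Proof.
case: P_valid => P_ge0 _ _.
by rewrite addr_ge0 //; case: ifP => _ //; rewrite subr_ge0 sum_inS_rule_le1.
Qed.

Lemma sum_rule_weights x : \sum_y rule_weights y x = 1.
Proof.
by rewrite big_split /= -!big_mkcond /= big_pred1_eq addrC subrK.
Qed.

Lemma rule_weights_feasible : feasible rule_weights.
Proof.
split=> [y x|x|y x y_notin].
- rewrite rule_weights_ge0 -(sum_rule_weights x) (bigD1 y) //= lerDl.
  by apply: sumr_ge0 => z _; apply: rule_weights_ge0.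
- exact: sum_rule_weights.
- rewrite /rule_weights (negbTE y_notin) add0r; case: eqP => // y_eq.
  by move: y_notin; rewrite y_eq inS_ffun.
Qed.

Lemma acc_le_objective : acc p P <= objective p q rule_weights.
Proof.
have [w_ge0 _] := prob_dist_wprob K p_dist.
case: P_valid => P_ge0 _ P_law.
rewrite /acc /objective.
under eq_bigr do rewrite big_mkcond mulr_sumr /=.
rewrite exchange_big /=; apply: ler_sum => z _; rewrite le_min; apply/andP; split.
  rewrite -P_law; apply: ler_sum => x _; rewrite mulrC ler_wpM2r //.
  by case: ifP.
apply: ler_sum => x _; rewrite mulrC ler_wpM2r // /rule_weights lerDl.
by case: ifP => _ //; rewrite subr_ge0 sum_inS_rule_le1.
Qed.

End RuleWeights.

Section ObjectiveMaximum.
Import ArrowAsProduct.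
Local Open Scope classical_set_scope.
Variables (R : realType) (Omega : finType) (K : nat) (p q : Omega -> R).
Local Notation X := {ffun 'I_K -> Omega}.

Lemma entry_continuous y x : continuous (fun beta : Omega -> X -> R => beta y x).
Proof.
move=> beta.
apply: (@continuous_comp _ _ _ (fun beta : Omega -> X -> R => beta y) (fun g : X -> R => g x)).
  exact: (@proj_continuous Omega (fun _ => X -> R)).
exact: (@proj_continuous X (fun _ => R)).
Qed.

(* Folding the support condition into the bounds [0 <= beta y x <= [y \in S]]
   exhibits the feasible set as a product of segments (compact by Tychonoff)
   cut by closed constraints. *)
Lemma feasible_setE :
  [set beta | feasible beta] =
  [set beta : Omega -> X -> R | forall y x, `[0, (inS y x)%:R] (beta y x)] `&`
  [set beta | forall x, \sum_y beta y x = 1].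
Proof.
apply/seteqP; split=> beta /=.
  case=> beta01 beta_sum beta_supp; split=> // y x; rewrite in_itv /=.
  by case: (boolP (inS y x)) => [_|/beta_supp ->]; rewrite ?beta01 ?lexx.
case=> beta_box beta_sum; split=> // [y x|y x y_notin].
  by have := beta_box y x; rewrite in_itv /= => /andP[-> /le_trans->] //; case: inS.
have := beta_box y x; rewrite in_itv /= (negbTE y_notin) => beta0.
by apply/eqP; rewrite eq_le andbC.
Qed.

Lemma feasible_compact : compact [set beta : Omega -> X -> R | feasible beta].
Proof.
rewrite feasible_setE; apply: compact_closedI.
  apply: (@tychonoff Omega (fun _ => X -> R)
    (fun y => [set g : X -> R | forall x, `[0, (inS y x)%:R] (g x)])) => y.
  by apply: (@tychonoff X (fun _ => R) (fun x => `[0, (inS y x)%:R])) => x;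
    apply: segment_compact.
have -> : [set beta : Omega -> X -> R | forall x, \sum_y beta y x = 1] =
          \bigcap_(x in setT) ((fun beta => \sum_y beta y x) @^-1` [set 1]).
  by apply/seteqP; split=> beta /= beta_sum x; [move=> _|]; apply: beta_sum.
apply: closed_bigI => x _; apply: preimage_closed; last exact: closed_eq.
move=> beta _; apply: (continuous_big add_continuous) => y _.
exact: entry_continuous.
Qed.

Lemma objective_continuous : continuous (@objective R Omega K p q).
Proof.
rewrite /objective /draft_dist; apply: (continuous_big add_continuous) => y _ beta.
apply: continuous_min; first exact: cst_continuous.
apply: (continuous_big add_continuous) => x _ {}beta.
by apply: continuousM; [exact: entry_continuous | exact: cst_continuous].
Qed.

Lemma objective_attains_max : prob_dist p -> prob_dist q -> (0 < K)%N ->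
  exists2 beta : Omega -> X -> R, feasible beta &
    forall b : Omega -> X -> R, feasible b -> objective p q b <= objective p q beta.
Proof.
move=> p_dist q_dist K_gt0.
have feasible_neq0 : [set beta : Omega -> X -> R | feasible beta] !=set0.
  exists (rule_weights K_gt0 (fun _ => q)).
  exact/rule_weights_feasible/(valid_rule_cst K p_dist q_dist).
have [beta] := compact_EVT_max feasible_neq0 feasible_compact
  (continuous_subspaceT objective_continuous).
rewrite inE => beta_feasible beta_max; exists beta => // b b_feasible.
by apply: beta_max; rewrite inE.
Qed.

End ObjectiveMaximum.

Section Optimum.
Local Open Scope classical_set_scope.
Variables (R : realType) (Omega : finType) (K : nat) (p q : Omega -> R).
Hypotheses (p_dist : prob_dist p) (q_dist : prob_dist q) (K_gt0 : (0 < K)%N).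
Local Notation X := {ffun 'I_K -> Omega}.
Variable beta : Omega -> X -> R.
Hypotheses (beta_feasible : feasible beta)
  (beta_max : forall b : Omega -> X -> R, feasible b -> objective p q b <= objective p q beta).
Local Notation accs :=
  [set acc p P | P in [set P : X -> Omega -> R | valid_rule p q P]].

Lemma acc_le_objective_max (P : X -> Omega -> R) :
  valid_rule p q P -> acc p P <= objective p q beta.
Proof.
move=> P_valid; apply: le_trans (acc_le_objective p_dist K_gt0 P_valid) _.
exact/beta_max/(rule_weights_feasible K_gt0 P_valid).
Qed.

Lemma acc_two_step_in : accs (acc p (two_step_rule p q beta)).
Proof. by exists (two_step_rule p q beta) => //; apply: two_step_rule_valid. Qed.

Lemma has_sup_acc : has_sup accs.
Proof.
split; first by exists (acc p (two_step_rule p q beta)); apply: acc_two_step_in.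
by exists (objective p q beta) => _ [P P_valid <-]; apply: acc_le_objective_max.
Qed.

Lemma Pstar_objective_max : Pstar K p q = objective p q beta.
Proof.
apply/le_anti/andP; split.
  apply: ge_sup; first by exists (acc p (two_step_rule p q beta)); apply: acc_two_step_in.
  by move=> _ [P P_valid <-]; apply: acc_le_objective_max.
apply: le_trans (objective_le_acc_two_step p_dist q_dist beta_feasible) _.
exact: sup_upper_bound has_sup_acc _ acc_two_step_in.
Qed.

Lemma acc_two_step_max : acc p (two_step_rule p q beta) = Pstar K p q.
Proof.
apply/le_anti/andP; split; first exact: sup_upper_bound has_sup_acc _ acc_two_step_in.
rewrite Pstar_objective_max.
exact: objective_le_acc_two_step.
Qed.

End Optimum.

Theorem theorem1 (R : realType) (Omega : finType) (K : nat) (p q : Omega -> R) :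
  prob_dist p -> prob_dist q -> (0 < K)%N ->
  (* P*(acc) is the maximum of the objective over feasible beta *)
  ((exists beta : Omega -> {ffun 'I_K -> Omega} -> R,
      feasible beta /\ objective p q beta = Pstar K p q) /\
   (forall beta : Omega -> {ffun 'I_K -> Omega} -> R,
      feasible beta -> objective p q beta <= Pstar K p q)) /\
  (* any maximizer yields a valid rule attaining P*(acc) *)
  (forall betas : Omega -> {ffun 'I_K -> Omega} -> R,
     feasible betas ->
     (forall beta : Omega -> {ffun 'I_K -> Omega} -> R,
        feasible beta -> objective p q beta <= objective p q betas) ->
     valid_rule p q (two_step_rule p q betas) /\
     acc p (two_step_rule p q betas) = Pstar K p q).
Proof.
move=> p_dist q_dist K_gt0.
have [beta beta_feasible beta_max] := objective_attains_max p_dist q_dist K_gt0.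
have Pstar_eq := Pstar_objective_max p_dist q_dist K_gt0 beta_feasible beta_max.
split; first split.
- by exists beta; rewrite Pstar_eq.
- by move=> b b_feasible; rewrite Pstar_eq; apply: beta_max.
move=> b b_feasible b_max; split; first exact: two_step_rule_valid.
exact: acc_two_step_max.
Qed.
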